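(* Let $k\ge2$, let $f:(k+1)^V\to\mathbb R_{\ge0}$ be a $k$-submodular function, and run Algorithm 2 with parameters $d_a\ge\frac12$ for all $a\in[k]$. Then for every part $a\in[k]$, $$\sum_{t\in T_a}\big(3w_{t,a}-\beta_a^{(t-1)}\big)+2n_a\beta_a\ \le\ Q_a\sum_{t\in S_a}w_{t,a},\qquad Q_a=2(1+d_a)\Big(1+\frac{1}{(1+d_a/n_a)^{n_a}-1}\Big).$$
   Context: Let $V$ be a finite ground set and $k\ge1$ an integer; $[k]=\{1,\dots,k\}$. $(k+1)^V$ denotes the set of $k$-tuples $\mathbf X=(X_1,\dots,X_k)$ of pairwise disjoint subsets of $V$; $\mathrm{supp}(\mathbf X)=X_1\cup\dots\cup X_k$; $\mathbf X\preceq\mathbf Y$ means $X_a\subseteq Y_a$ for all $a$; $(\mathbf X\sqcap\mathbf Y)_a=X_a\cap Y_a$ and $(\mathbf X\sqcup\mathbf Y)_a=(X_a\cup Y_a)\setminus\bigcup_{b\neq a}(X_b\cup Y_b)$. A function $f:(k+1)^V\to\mathbb R_{\ge0}$ is $k$-submodular if $f(\mathbf X)+f(\mathbf Y)\ge f(\mathbf X\sqcap\mathbf Y)+f(\mathbf X\sqcup\mathbf Y)$ for all $\mathbf X,\mathbf Y\in(k+1)^V$. For $t\notin\mathrm{supp}(\mathbf X)$ and $a\in[k]$, $\Delta_{t,a}f(\mathbf X)=f(X_1,\dots,X_{a-1},X_a\cup\{t\},X_{a+1},\dots,X_k)-f(\mathbf X)$. Budgets are positive integers $n_1,\dots,n_k$.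 Algorithm 2. The elements of $V$ are labeled $1,\dots,m$ in arrival order. Given $d_a>0$, set $c_a=(1+d_a)/\big((1+d_a/n_a)^{n_a}-1\big)$ and $g_a(i)=\frac{c_a}{n_a}(1+d_a/n_a)^{i-1}$ for $i\in[n_a]$. Maintain $\mathbf S$, initially $(\emptyset,\dots,\emptyset)$, and thresholds $\beta_a=0$. For $t=1,\dots,m$: compute $w_{t,a}=\Delta_{t,a}f(\mathbf S)$ for all $a$; let $a$ be a part maximizing the modified discounted gain $w_{t,a}-\beta_a-\min_{a'\neq a}\beta_{a'}$; if this modified discounted gain is $\ge0$, then: if $|S_a|<n_a$ add $t$ to $S_a$, otherwise remove from $S_a$ an element $t'$ minimizing $w_{t',a}$ over $S_a$ and add $t$; then set $\beta_a=\sum_{i=1}^{n_a}w_a(i)g_a(i)$ where $w_a(i)$ is the $i$-th largest value in $\{w_{s,a}:s\in S_a\}$ ($0$ if $i>|S_a|$). Weights are never recomputed. Otherwise $t$ is discarded. Output the final $\mathbf S$. Notation: $\mathbf S^{(t)}$ and $\beta_a^{(t)}$ denote the values after processing element $t$ (with $\mathbf S^{(0)}$ empty and $\beta_a^{(0)}=0$), so $w_{t,a}=\Delta_{t,a}f(\mathbf S^{(t-1)})$; $\mathbf S$, $\beta_a$ without superscript are final values; $T_a=\bigcup_t S_a^{(t)}$ is the set of elements ever placed in part $a$. *)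

From HB Require Import structures.
From mathcomp Require Import all_boot all_order all_algebra.
Set Implicit Arguments. Unset Strict Implicit. Unset Printing Implicit Defensive.
Import Order.TTheory GRing.Theory Num.Theory.
Local Open Scope ring_scope.

Section Defs.
Variables (R : realFieldType) (m k : nat).

(* An element X of (k+1)^V, with V = 'I_m (elements 0..m-1 in arrival
   order): X x = Some a means x \in X_a, X x = None means x \notin supp X. *)
Definition assign := {ffun 'I_m -> option 'I_k}.

Definition part (X : assign) (a : 'I_k) : {set 'I_m} := [set x | X x == Some a].

Definition emptyA : assign := [ffun _ => None].

(* (X meet Y)_a = X_a \cap Y_a *)
Definition meetA (X Y : assign) : assign :=
  [ffun x => if X x == Y x then X x else None].

(* (X join Y)_a = (X_a \cup Y_a) \ \bigcup_{b<>a} (X_b \cup Y_b) *)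
Definition joinA (X Y : assign) : assign :=
  [ffun x => match X x, Y x with
             | None, o => o
             | o, None => o
             | Some a, Some b => if a == b then Some a else None
             end].

Definition k_submodular (f : assign -> R) :=
  forall X Y : assign, f (meetA X Y) + f (joinA X Y) <= f X + f Y.

Definition upd (X : assign) (t : 'I_m) (o : option 'I_k) : assign :=
  [ffun x => if x == t then o else X x].

Definition delta (f : assign -> R) (X : assign) (t : 'I_m) (a : 'I_k) : R :=
  f (upd X t (Some a)) - f X.

Definition c_par (n : 'I_k -> nat) (d : 'I_k -> R) (a : 'I_k) : R :=
  (1 + d a) / ((1 + d a / (n a)%:R) ^+ n a - 1).

(* g_a(i+1) (0-based index i) = c_a/n_a (1+d_a/n_a)^i *)
Definition g_par (n : 'I_k -> nat) (d : 'I_k -> R) (a : 'I_k) (i : nat) : R :=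
  c_par n d a / (n a)%:R * (1 + d a / (n a)%:R) ^+ i.

Definition Q_par (n : 'I_k -> nat) (d : 'I_k -> R) (a : 'I_k) : R :=
  2 * (1 + d a) * (1 + 1 / ((1 + d a / (n a)%:R) ^+ n a - 1)).

(* A run of the algorithm is a trace St : nat -> assign, St i being S^(i)
   (the state after the first i elements, i.e. elements 0..i-1, have been
   processed).  Weights: w_{t,a} = Delta_{t,a} f(S^(t-1)), i.e. computed
   from the state just before t arrives. *)
Definition wt (f : assign -> R) (St : nat -> assign) (t : 'I_m) (a : 'I_k) : R :=
  delta f (St (val t)) t a.

(* beta_a = sum_{i=1}^{n_a} w_a(i) g_a(i), w_a(i) the i-th largest value of
   the multiset {w_{s,a} : s in S_a} (0 if i > |S_a|). *)
Definition betaOf (w : 'I_m -> 'I_k -> R) (n : 'I_k -> nat) (d : 'I_k -> R)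
    (X : assign) (a : 'I_k) : R :=
  \sum_(i < n a)
     nth 0 (sort (fun x y : R => y <= x) [seq w s a | s <- enum (part X a)]) i
       * g_par n d a i.

(* min_{a' <> a} beta_{a'} (the sequence is nonempty when k >= 2, and then
   the default, being its head, is irrelevant) *)
Definition minOther (bet : 'I_k -> R) (a : 'I_k) : R :=
  let s := [seq bet a' | a' <- enum 'I_k & a' != a] in
  \big[Order.min/head 0 s]_(x <- s) x.

(* One step of Algorithm 2 on element t, from state S to state S'.
   All tie-breaking choices are allowed. *)
Definition step (f : assign -> R) (n : 'I_k -> nat) (d : 'I_k -> R)
    (St : nat -> assign) (t : 'I_m) : Prop :=
  let S := St (val t) in
  let S' := St (val t).+1 in
  let w := wt f St in
  let bet := betaOf w n d S in
  let gain := fun a => w t a - bet a - minOther bet a in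
  ((forall a, gain a < 0) /\ S' = S)
  \/ (exists a, (forall b, gain b <= gain a) /\ 0 <= gain a /\
       (((#|part S a| < n a)%N /\ S' = upd S t (Some a))
        \/ ((n a <= #|part S a|)%N /\
            exists t', t' \in part S a /\
              (forall s, s \in part S a -> w t' a <= w s a) /\
              S' = upd (upd S t' None) t (Some a)))).

Definition valid_run (f : assign -> R) (n : 'I_k -> nat) (d : 'I_k -> R)
    (St : nat -> assign) : Prop :=
  St 0%N = emptyA /\ forall t : 'I_m, step f n d St t.

Definition everIn (St : nat -> assign) (a : 'I_k) : {set 'I_m} :=
  [set t | [exists i : 'I_m.+1, St (val i) t == Some a]].

End Defs.

From HB Require Import structures.
From mathcomp Require Import all_boot all_order all_algebra.
From mathcomp Require Import zify ring lra.
Set Implicit Arguments. Unset Strict Implicit. Unset Printing Implicit Defensive.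
Import Order.TTheory GRing.Theory Num.Theory.
Local Open Scope ring_scope.

(* Fix a part a, write N = n_a, g = g_a, and let
   Phi_i = sum_{t < i, t in T_a} (3 w_{t,a} - beta_a^(t-1)) + 2 N beta_a^(i)
   be the left-hand side after i arrivals.  We show by induction on i that
   Phi_i <= Q_a * sum_{t in S_a^(i)} w_{t,a}.  Only steps placing the new
   element t in part a matter; then beta_a^(t-1) <= w_{t,a} (a nonnegative
   modified discounted gain beats the threshold), and the claim reduces to a
   purely numerical fact about geometric weights: inserting a value y into a
   nonincreasing weight list (and dropping its last entry z when the part is
   full) gives 2N beta' - (2N+1) beta + Q z <= (Q - 3) y whenever beta <= y. *)

(* Inserting into a list sorted in nonincreasing order.  The merge of a
   singleton is the insertion of its element before the first entry it
   dominates. *)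
Section SortedInsertion.
Variables (disp : Order.disp_t) (T : orderType disp).
Local Open Scope order_scope.
Local Notation ge := (fun x y : T => y <= x).

Lemma ge_total : total ge. Proof. by move=> x y; rewrite orbC le_total. Qed.
Lemma ge_trans : transitive ge. Proof. by move=> x y z /[swap]; apply: le_trans. Qed.
Lemma ge_anti : antisymmetric ge.
Proof. by move=> x y /andP[yx xy]; apply/eqP; rewrite eq_le xy yx. Qed.

Lemma sorted_ge_eq (s1 s2 : seq T) :
  sorted ge s1 -> sorted ge s2 -> perm_eq s1 s2 -> s1 = s2.
Proof. exact: (sorted_eq ge_trans ge_anti). Qed.

Lemma sort_ge_perm (s1 s2 : seq T) : perm_eq s1 s2 -> sort ge s1 = sort ge s2.
Proof. exact/perm_sortP/ge_anti/ge_trans/ge_total. Qed.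

Lemma sort_cons_merge (y : T) (l : seq T) :
  sort ge (y :: l) = merge ge [:: y] (sort ge l).
Proof.
apply: sorted_ge_eq; first exact: (sort_sorted ge_total).
  by apply: (merge_sorted ge_total) => //; exact: (sort_sorted ge_total).
by rewrite perm_sort perm_sym perm_merge /= perm_cons perm_sort.
Qed.

Lemma nth_merge1 (x0 y : T) (L : seq T) i :
  nth x0 (merge ge [:: y] L) i =
  if (i < find (<= y) L)%N then nth x0 L i
  else if i == find (<= y) L then y else nth x0 L i.-1.
Proof.
elim: L i => [|z L IH] i /=; first by case: i => [|[|i]].
case: ifP => _; first by case: i.
case: i => [|i] //=; rewrite IH ltnS eqSS.
case: ltngtP => // lt_find_i.
by case: i lt_find_i.
Qed.

Lemma sort_cons_min (z : T) (l : seq T) : (forall u, u \in l -> z <= u) ->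
  sort ge (z :: l) = rcons (sort ge l) z.
Proof.
move=> z_min; apply: sorted_ge_eq; first exact: (sort_sorted ge_total).
  have := sort_sorted ge_total l.
  have : all (>= z) (sort ge l) by apply/allP => u; rewrite mem_sort; exact: z_min.
  case: (sort ge l) => [|h t] // /allP z_min' /= h_path.
  by rewrite rcons_path h_path z_min' // mem_last.
by rewrite perm_sort perm_sym perm_rcons perm_cons perm_sort.
Qed.

End SortedInsertion.

Section WeightedSets.
Variables (R : realFieldType) (T : finType) (w : T -> R).
Local Notation ge := (fun x y : R => y <= x).

Definition wsorted (A : {set T}) : seq R := sort ge [seq w s | s <- enum A].

Lemma size_wsorted A : size (wsorted A) = #|A|.
Proof. by rewrite size_sort size_map cardE. Qed.

Lemma enum_setU1 (x : T) (A : {set T}) :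
  x \notin A -> perm_eq (enum (x |: A)) (x :: enum A).
Proof.
move=> xA; apply: uniq_perm; rewrite ?enum_uniq //= ?mem_enum ?xA ?enum_uniq //.
by move=> y; rewrite in_cons !mem_enum in_setU1.
Qed.

Lemma wsorted_setU1 (x : T) (A : {set T}) :
  x \notin A -> wsorted (x |: A) = merge ge [:: w x] (wsorted A).
Proof.
move=> xA; rewrite /wsorted -sort_cons_merge.
by apply: sort_ge_perm; rewrite -map_cons perm_map // enum_setU1.
Qed.

Lemma wsorted_setD1_min (t : T) (A : {set T}) :
  t \in A -> (forall s, s \in A -> w t <= w s) ->
  wsorted A = rcons (wsorted (A :\ t)) (w t).
Proof.
move=> tA t_min; rewrite /wsorted -sort_cons_min.
  rewrite -{1}(setD1K tA) -map_cons; apply: sort_ge_perm.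
  by rewrite perm_map // enum_setU1 // setD11.
move=> u /mapP[s]; rewrite mem_enum => /setD1P[_ sA] ->; exact: t_min.
Qed.

(* The last index is the weight of the evicted element (0 if none). *)
Inductive insert_rule (N : nat) (t : T) (A : {set T}) : {set T} -> R -> Prop :=
  | InsertFree of (#|A| < N)%N : insert_rule N t A (t |: A) 0
  | InsertEvict t' of (N <= #|A|)%N & t' \in A & (forall s, s \in A -> w t' <= w s) :
      insert_rule N t A (t |: (A :\ t')) (w t').

Section InsertRule.
Variables (N : nat) (t : T) (A A' : {set T}) (z : R).
Hypothesis ins : insert_rule N t A A' z.

Lemma insert_rule_sub : A' \subset t |: A.
Proof. by case: ins => [|t' _ _ _]; rewrite ?setUS ?subsetDl. Qed.

Lemma insert_rule_card : (#|A| <= N)%N -> (#|A'| <= N)%N.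
Proof.
case: ins => [lt_AN|t' le_NA t'A _]; rewrite cardsU1.
  by move: (leq_b1 (t \notin A)) lt_AN; lia.
by move: (leq_b1 (t \notin A :\ t')); rewrite (cardsD1 t' A) t'A; lia.
Qed.

Lemma insert_rule_mem : t \in A'.
Proof. by case: ins => *; rewrite setU11. Qed.

Lemma insert_rule_sum : t \notin A ->
  \sum_(s in A') w s = \sum_(s in A) w s + w t - z.
Proof.
case: ins => [_|t' _ t'A _] tA.
  by rewrite big_setU1 //= subr0 addrC.
rewrite big_setU1 /=; last by rewrite in_setD1 negb_and tA orbT.
by rewrite (big_setD1 t' t'A) /=; ring.
Qed.

Lemma insert_rule_sorted : (#|A| <= N)%N -> t \notin A ->
  wsorted A' = merge ge [:: w t] (take N.-1 (wsorted A)) /\ z = nth 0 (wsorted A) N.-1.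
Proof.
case: ins => [lt_AN _|t' le_NA t'A t'_min le_AN] tA.
  have small : (size (wsorted A) <= N.-1)%N.
    by rewrite size_wsorted -ltnS prednK // (leq_ltn_trans _ lt_AN).
  by rewrite wsorted_setU1 // take_oversize // nth_default.
have sizeD : size (wsorted (A :\ t')) = N.-1.
  by rewrite size_wsorted; move: le_NA le_AN; rewrite (cardsD1 t' A) t'A; lia.
rewrite wsorted_setU1 ?in_setD1 ?(negbTE tA) ?andbF //.
by rewrite (wsorted_setD1_min t'A t'_min) -cats1 take_size_cat // nth_cat sizeD ltnn subnn.
Qed.

End InsertRule.
End WeightedSets.

Section GeometricWeights.
Variables (R : realFieldType) (k : nat) (n : 'I_k -> nat) (d : 'I_k -> R) (a : 'I_k).
Hypothesis n_gt0 : (0 < n a)%N.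
Hypothesis d_ge : 1 / 2 <= d a.

Local Notation ge := (fun x y : R => y <= x).

Local Notation N := (n a)%:R.
Local Notation D := (d a).
Local Notation rho := (1 + d a / (n a)%:R).
Local Notation c := (c_par n d a).
Local Notation g := (g_par n d a).
Local Notation Q := (Q_par n d a).

Lemma N_neq0 : N != 0 :> R.
Proof. by rewrite pnatr_eq0 -lt0n. Qed.

Lemma D_gt0 : 0 < D.
Proof. by apply: lt_le_trans d_ge; lra. Qed.

Lemma rhoN_gt1 : 1 < rho ^+ n a.
Proof.
by rewrite exprn_egt1 -?lt0n // ltrDl divr_gt0 ?D_gt0 ?ltr0n.
Qed.

Lemma c_gt0 : 0 < c.
Proof. by rewrite /c_par divr_gt0 ?subr_gt0 ?rhoN_gt1 //; have := D_gt0; lra. Qed.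

Lemma g_ge0 i : 0 <= g i.
Proof.
apply: mulr_ge0; first by rewrite divr_ge0 ?ler0n ?(ltW c_gt0).
by rewrite exprn_ge0 // addr_ge0 ?divr_ge0 ?ler0n ?(ltW D_gt0).
Qed.

Lemma g_succ i : g i.+1 = rho * g i.
Proof. by rewrite /g_par exprS; ring. Qed.

Lemma N_rho : N * rho = N + D.
Proof. by field; exact: N_neq0. Qed.

Lemma geo_partial_sum j : D * \sum_(0 <= i < j) g i = N * g j - c.
Proof.
elim: j => [|j IH].
  by rewrite big_geq // mulr0 /g_par expr0; field; exact: N_neq0.
by rewrite big_nat_recr //= mulrDr IH g_succ mulrA N_rho; ring.
Qed.

(* Q_a = 2 c_a rho^N, written through the last weight, and Q_a - 3. *)
Lemma Q_last : Q = 2 * (N + D) * g (n a).-1.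
Proof.
have rhoE : rho ^+ n a = rho * rho ^+ (n a).-1 by rewrite -exprS prednK.
have rhoN_neq1 : rho * rho ^+ (n a).-1 - 1 != 0.
  by rewrite -rhoE subr_eq0 gt_eqF // rhoN_gt1.
rewrite -N_rho /Q_par /g_par /c_par rhoE.
field; rewrite N_neq0 /=.
have -> : (N + D) * rho ^+ (n a).-1 + -1 * N = N * (rho * rho ^+ (n a).-1 - 1).
  by rewrite -N_rho; ring.
by rewrite mulf_neq0 ?N_neq0.
Qed.

Lemma Q_sub3 : Q - 3 = 2 * c + 2 * D - 1.
Proof.
have rhoN_neq1 : rho ^+ n a - 1 != 0 by rewrite subr_eq0 gt_eqF // rhoN_gt1.
by rewrite /Q_par /c_par; field.
Qed.
(* Writing
   A, C for the parts of the old threshold before and after j, the left-hand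
   side equals (2D - 1) beta - 2 D A + 2 N g_j y, and D A >= (N g_j - c) y. *)
Lemma insert_weight_bound (x x' : nat -> R) (y : R) (j : nat) :
  (j < n a)%N ->
  (forall i, (i < j)%N -> y <= x i) ->
  (forall i, (i < n a)%N ->
     x' i = if (i < j)%N then x i else if i == j then y else x i.-1) ->
  \sum_(i < n a) x i * g i <= y ->
  2 * N * \sum_(i < n a) x' i * g i - (2 * N + 1) * \sum_(i < n a) x i * g i
    + Q * x (n a).-1 <= (Q - 3) * y.
Proof.
move=> lt_jN x_above x'E old_le.
set N' := (n a).-1; have NE : n a = N'.+1 by rewrite prednK.
have le_jN' : (j <= N')%N by rewrite -ltnS -NE.
set A := \sum_(0 <= i < j) x i * g i.
set C := \sum_(j <= i < N') x i * g i.
set G := \sum_(0 <= i < j) g i.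
have old_split : \sum_(i < n a) x i * g i = A + C + x N' * g N'.
  rewrite -(big_mkord xpredT (fun i => x i * g i)).
  by rewrite (big_cat_nat (leq0n j) (ltnW lt_jN)) NE big_nat_recr //= addrA.
have new_tail : \sum_(j <= i < n a) x' i * g i = y * g j + rho * C.
  rewrite {1}NE big_nat_recl // x'E // ltnn eqxx; congr (_ + _).
  rewrite /C mulr_sumr; apply: eq_big_nat => i /andP[le_ji lt_iN'].
  have lt_iN : (i.+1 < n a)%N by rewrite NE ltnS.
  rewrite x'E // ltnNge (leqW le_ji) /= gtn_eqF ?ltnS //=.
  by rewrite g_succ; ring.
have new_split : \sum_(i < n a) x' i * g i = A + y * g j + rho * C.
  rewrite -(big_mkord xpredT (fun i => x' i * g i)).
  rewrite (big_cat_nat (leq0n j) (ltnW lt_jN)) /= new_tail addrA; congr (_ + _ + _).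
  apply: eq_big_nat => i /andP[_ lt_ij].
  by rewrite x'E ?lt_ij // (ltn_trans lt_ij).
have A_lb : D * (G * y) <= D * A.
  rewrite ler_wpM2l ?(ltW D_gt0) // /A /G mulr_suml.
  apply: ler_sum_nat => i /andP[_ lt_ij].
  by rewrite mulrC ler_wpM2r ?g_ge0 ?x_above.
have old_lb : (2 * D - 1) * (A + C + x N' * g N') <= (2 * D - 1) * y.
  rewrite ler_wpM2l -?old_split //; move: d_ge; lra.
rewrite mulrA geo_partial_sum in A_lb.
rewrite new_split old_split Q_sub3 Q_last.
have NrhoC : N * (rho * C) = N * C + D * C by rewrite mulrA N_rho; ring.
lra.
Qed.

Definition betaL (L : seq R) : R := \sum_(i < n a) nth 0 L i * g i.

Lemma betaL_insert (L : seq R) (y : R) : betaL L <= y ->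
  2 * N * betaL (merge ge [:: y] (take (n a).-1 L)) - (2 * N + 1) * betaL L
    + Q * nth 0 L (n a).-1 <= (Q - 3) * y.
Proof.
set L' := take (n a).-1 L; set j := find (<= y) L'.
have le_jL' : (j <= size L')%N := find_size _ _.
have le_L'N : (size L' <= (n a).-1)%N by rewrite size_take_min geq_minl.
apply: (insert_weight_bound (j := j)) => [|i lt_ij|i lt_iN].
- by move: le_jL' le_L'N n_gt0; lia.
- have lt_iN : (i < (n a).-1)%N by move: lt_ij le_jL' le_L'N; lia.
  have := before_find 0 lt_ij; rewrite nth_take // => /negbT.
  by rewrite -ltNge => /ltW.
- rewrite nth_merge1 -/j; case: ltngtP => [lt_ij|lt_ji|//].
    by rewrite nth_take //; move: lt_ij le_jL' le_L'N; lia.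
  by rewrite nth_take //; move: lt_ji lt_iN; lia.
Qed.

Lemma insert_rule_beta (T : finType) (w : T -> R) (t : T) (A A' : {set T}) (z : R) :
  (#|A| <= n a)%N -> t \notin A -> insert_rule w (n a) t A A' z ->
  betaL (wsorted w A) <= w t ->
  2 * N * betaL (wsorted w A') - (2 * N + 1) * betaL (wsorted w A) + Q * z
    <= (Q - 3) * w t.
Proof.
move=> le_AN tA ins; have [-> ->] := insert_rule_sorted ins le_AN tA.
exact: betaL_insert.
Qed.

End GeometricWeights.

Lemma part_upd (m k : nat) (X : assign m k) x o c :
  part (upd X x o) c = if o == Some c then x |: part X c else part X c :\ x.
Proof.
apply/setP => y; rewrite /part.
case: ifP => /eqP ho; rewrite !inE ffunE; case: (y == x) => //=.
  by rewrite ho eqxx.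
by apply/eqP.
Qed.

Lemma setD1_id (T : finType) (A : {set T}) x : x \notin A -> A :\ x = A.
Proof. by move=> xA; apply/setDidPl; rewrite disjoint_sym disjoints1. Qed.

Lemma sum_prefix_succ (V : nmodType) (m : nat) (F : 'I_m -> V) (P : pred 'I_m) (t0 : 'I_m) :
  \sum_(t : 'I_m | (t < t0.+1)%N && P t) F t =
  \sum_(t : 'I_m | (t < t0)%N && P t) F t + (if P t0 then F t0 else 0).
Proof.
have prefixE (t : 'I_m) : ((t < t0.+1)%N && P t) = ((t < t0)%N && P t) || ((t == t0) && P t).
  by rewrite ltnS leq_eqVlt andb_orl orbC.
case: ifP => Pt0.
  rewrite (bigD1 t0) /= ?ltnSn ?Pt0 // addrC; congr (_ + _); apply: eq_bigl => t.
  by rewrite prefixE; case: (eqVneq t t0) => [->|_]; rewrite ?ltnn ?andbF ?orbF ?andbT.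
rewrite addr0; apply: eq_bigl => t.
by rewrite prefixE; case: (eqVneq t t0) => [->|_]; rewrite ?Pt0 ?andbF ?orbF.
Qed.

Section Run.
Variables (R : realFieldType) (m k : nat) (f : assign m k -> R) (n : 'I_k -> nat)
  (d : 'I_k -> R) (St : nat -> assign m k).
Hypothesis run : valid_run f n d St.

Local Notation w := (wt f St).
Local Notation bet X := (betaOf (wt f St) n d X).

Definition gain (t : 'I_m) (b : 'I_k) : R :=
  w t b - bet (St t) b - minOther (bet (St t)) b.

Lemma step_cases (t : 'I_m) :
  (St t.+1 = St t) \/
  exists b, 0 <= gain t b /\
    (((#|part (St t) b| < n b)%N /\ St t.+1 = upd (St t) t (Some b)) \/
     ((n b <= #|part (St t) b|)%N /\ exists t', t' \in part (St t) b /\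
        (forall s, s \in part (St t) b -> w t' b <= w s b) /\
        St t.+1 = upd (upd (St t) t' None) t (Some b))).
Proof.
have := run.2 t; rewrite /step.
by case=> [[_ ->]|[b [_ [gain_ge0 placed]]]]; [left | right; exists b].
Qed.

Lemma frame (t : 'I_m) x : x != t -> St t.+1 x = St t x \/ St t.+1 x = None.
Proof.
move=> xt; case: (step_cases t) => [->|[b [_ [[_ ->]|[_ [t' [_ [_ ->]]]]]]]]; [by left|..].
  by left; rewrite ffunE (negbTE xt).
by rewrite !ffunE (negbTE xt); case: (x == t'); [right | left].
Qed.

Lemma fresh (t : 'I_m) i : (i <= t)%N -> St i t = None.
Proof.
elim: i => [|i IH] le_it; first by rewrite run.1 ffunE.
have lt_im : (i < m)%N := ltn_trans le_it (ltn_ord t).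
have ti : t != Ordinal lt_im by rewrite -val_eqE /= neq_ltn le_it orbT.
by case: (frame ti) => /= ->; rewrite ?IH // ltnW.
Qed.

Lemma fresh_part (t : 'I_m) c : t \notin part (St t) c.
Proof. by rewrite inE fresh. Qed.

Lemma back (t : 'I_m) b i : (i <= m)%N -> St i t = Some b -> St t.+1 t = Some b.
Proof.
elim: i => [|i IH] le_im; first by rewrite run.1 ffunE.
case: (eqVneq t (Ordinal le_im)) => [-> //|ti].
by case: (frame ti) => /= ->; [exact: IH (ltnW le_im) | ].
Qed.

Lemma everInE a (t : 'I_m) : (t \in everIn St a) = (t \in part (St t.+1) a).
Proof.
rewrite !inE; apply/existsP/idP => [[i /eqP Sit]|Stt].
  by apply/eqP; apply: (back _ Sit); rewrite -ltnS ltn_ord.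
by exists (Ordinal (ltn_ord t : (t.+1 < m.+1)%N)).
Qed.

Lemma step_parts (t : 'I_m) :
  (St t.+1 = St t) \/
  exists b (A : {set 'I_m}) (z : R), [/\ 0 <= gain t b,
    insert_rule (w^~ b) (n b) t (part (St t) b) A z,
    part (St t.+1) b = A &
    forall c, c != b -> part (St t.+1) c = part (St t) c].
Proof.
have Sb_neq c b : c != b -> (Some b == Some c) = false.
  by move=> cb; apply/eqP => -[bc]; rewrite bc eqxx in cb.
case: (step_cases t) => [|[b [gain_ge0 [[lt_SN ->]|[le_NS [t' [t'S [t'_min ->]]]]]]]].
- by left.
- right; exists b, (t |: part (St t) b), 0; split=> //.
  + exact: InsertFree.
  + by rewrite part_upd eqxx.
  + by move=> c cb; rewrite part_upd Sb_neq // setD1_id ?fresh_part.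
right; exists b, (t |: (part (St t) b :\ t')), (w t' b); split=> //.
- exact: InsertEvict.
- by rewrite !part_upd eqxx.
move=> c cb; rewrite !part_upd Sb_neq //= !setD1_id ?fresh_part //.
all: by move: t'S; rewrite !inE => /eqP ->; rewrite Sb_neq.
Qed.

Hypothesis n_gt0 : forall a, (0 < n a)%N.
Hypothesis d_ge : forall a, 1 / 2 <= d a.

Lemma beta_ge0 X b : {in part X b, forall x, 0 <= w x b} -> 0 <= bet X b.
Proof.
move=> w_ge0; apply: sumr_ge0 => i _; rewrite mulr_ge0 ?g_ge0 //.
set L := sort _ _; have [lt_iL|] := ltnP i (size L); last by move/(nth_default 0)->.
by move: (mem_nth 0 lt_iL); rewrite mem_sort => /mapP[x]; rewrite mem_enum => /w_ge0 ? ->.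
Qed.

Lemma minOther_ge0 (bt : 'I_k -> R) a : (forall b, 0 <= bt b) -> 0 <= minOther bt a.
Proof.
move=> bt_ge0; rewrite /minOther /=; set s := [seq _ | _ <- _].
have s_ge0 x : x \in s -> 0 <= x by case/mapP=> b _ ->.
rewrite big_seq; apply: (big_ind (fun x => 0 <= x)) => [||x /s_ge0 //].
- by case: s s_ge0 => //= x s' s_ge0; rewrite s_ge0 ?mem_head.
- by move=> x y x_ge0 y_ge0; rewrite le_min x_ge0 y_ge0.
Qed.

Definition run_inv (i : nat) : Prop :=
  forall b, (#|part (St i) b| <= n b)%N /\ {in part (St i) b, forall x, 0 <= w x b}.

Lemma gain_beta (t : 'I_m) b : run_inv t -> 0 <= gain t b -> bet (St t) b <= w t b.
Proof.
move=> inv gain_ge0; have bet_ge0 c : 0 <= bet (St t) c by apply/beta_ge0/(inv c).2.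
by move: gain_ge0 (minOther_ge0 b bet_ge0); rewrite /gain; lra.
Qed.

Lemma part_init b : part (St 0) b = set0.
Proof. by apply/setP=> x; rewrite run.1 !inE ffunE. Qed.

(* The invariant holds throughout the run: an element entering part b has
   weight at least the (nonnegative) threshold of b. *)
Lemma run_inv_all i : (i <= m)%N -> run_inv i.
Proof.
elim: i => [|i IH] le_im b.
  by rewrite part_init cards0; split=> // x; rewrite inE.
have inv := IH (ltnW le_im); pose t := Ordinal le_im.
have iE : i = t by []; rewrite iE in inv *.
case: (step_parts t) => [->|[c [A [z [gain_ge0 ins part_c part_other]]]]]; first exact: inv.
have [->|bc] := eqVneq b c; last by rewrite part_other //; exact: inv.
have [le_AN w_ge0] := inv c; rewrite part_c; split; first exact: insert_rule_card ins le_AN.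
move=> x /(subsetP (insert_rule_sub ins)); case/setU1P => [->|]; last exact: w_ge0.
exact: le_trans (beta_ge0 w_ge0) (gain_beta inv gain_ge0).
Qed.

Lemma betaOfE X b : bet X b = betaL n d b (wsorted (w^~ b) (part X b)).
Proof. by []. Qed.

Definition potential (a : 'I_k) (i : nat) : R :=
  \sum_(t : 'I_m | (t < i)%N && (t \in part (St t.+1) a)) (3 * w t a - bet (St t) a)
  + 2 * (n a)%:R * bet (St i) a.

Lemma potential_bound a i : (i <= m)%N ->
  potential a i <= Q_par n d a * \sum_(t in part (St i) a) w t a.
Proof.
elim: i => [|i IH] le_im.
  rewrite /potential big_pred0 => [|t]; last by rewrite ltn0.
  rewrite betaOfE part_init big_set0 /betaL big1 ?mulr0 ?addr0 // => j _.
  by rewrite /wsorted enum_set0 nth_nil mul0r.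
have {}IH := IH (ltnW le_im); pose t := Ordinal le_im.
have iE : i = t by []; rewrite iE in IH *; rewrite /potential sum_prefix_succ.
case: (step_parts t) => [->|[c [A [z [gain_ge0 ins part_c part_other]]]]].
  by rewrite (negbTE (fresh_part t a)) addr0.
have inv : run_inv t := run_inv_all (ltnW le_im).
have [ac|ac] := eqVneq a c; last first.
  by rewrite !betaOfE part_other // (negbTE (fresh_part t a)) addr0 -betaOfE.
subst c.
rewrite part_c (insert_rule_mem ins) (insert_rule_sum ins (fresh_part t a)).
have := insert_rule_beta (n_gt0 a) (d_ge a) (inv a).1 (fresh_part t a) ins.
rewrite -!betaOfE => /(_ (gain_beta inv gain_ge0)).
by move: IH; rewrite /potential !betaOfE part_c; lra.
Qed.

End Run.

Theorem mainTheorem9 (R : realFieldType) (m k : nat)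
  (f : assign m k -> R) (n : 'I_k -> nat) (d : 'I_k -> R)
  (St : nat -> assign m k) :
  (2 <= k)%N ->
  (forall X, 0 <= f X) ->
  k_submodular f ->
  (forall a, (0 < n a)%N) ->
  (forall a, 1 / 2 <= d a) ->
  valid_run f n d St ->
  forall a : 'I_k,
    \sum_(t in everIn St a)
        (3 * wt f St t a - betaOf (wt f St) n d (St (val t)) a)
      + 2 * (n a)%:R * betaOf (wt f St) n d (St m) a
    <= Q_par n d a * \sum_(t in part (St m) a) wt f St t a.
Proof.
move=> _ _ _ n_gt0 d_ge run a.
rewrite (eq_bigl (fun t : 'I_m => (t < m)%N && (t \in part (St t.+1) a))).
  by have := potential_bound run n_gt0 d_ge a (leqnn m).
by move=> t; rewrite (everInE run) ltn_ord.
Qed.
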